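(* For every mixed graph $G$ without directed cycles: $\Lambda(G)+1\le \mathrm{nd}_{\mathrm m}(G^+)$, $\Lambda(G)\le\mathrm{tw}(G^+)$, $\Lambda(G)\le 2^{\mathrm{td}(G)}-2$, and $\Lambda(G)\le 2\,\mathrm{vc}(G)$.
   Context: A mixed graph $G$ consists of a finite vertex set $V(G)$, a set $E(G)$ of undirected edges and a set $A(G)$ of directed arcs; it is simple and contains no directed cycle. The maxrank $\Lambda(G)$ is the number of arcs on a longest directed path. The transitive closure $G^+$ is obtained by adding every arc $(u,v)$ such that $G$ has a directed path from $u$ to $v$ and removing edges parallel to such arcs. $N^+(v)$, $N^-(v)$, $N^{\mathrm u}(v)$ are the out-, in- and undirected neighbors of $v$; $u,v$ have the same mixed type if $N^{\mathrm u}(u)\setminus\{v\}=N^{\mathrm u}(v)\setminus\{u\}$, $N^-(u)=N^-(v)$, $N^+(u)=N^+(v)$; the mixed neighborhood diversity $\mathrm{nd}_{\mathrm m}$ is the number of mixed types. $\mathrm{tw},\mathrm{td},\mathrm{vc}$ are treewidth, treedepth, vertex cover number of the underlying undirected graph (arcs replaced by edges); $\mathrm{tw}(G^+)$ refers to the underlying graph of $G^+$. *)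

From mathcomp Require Import all_boot.
Set Implicit Arguments.
Unset Strict Implicit.
Unset Printing Implicit Defensive.

Record mixed_graph (V : finType) := MixedGraph {
  medge : rel V;
  marc  : rel V
}.

Section MixedGraphs.
Variable V : finType.
Implicit Types (G : mixed_graph V).

Definition simple_mixed G : Prop :=
  [/\ symmetric (medge G), irreflexive (medge G), irreflexive (marc G),
      (forall u v, medge G u v -> ~~ marc G u v) &
      (forall u v, marc G u v -> ~~ marc G v u)].

Definition no_directed_cycle G : Prop :=
  forall x y, marc G x y -> ~~ connect (marc G) y x.

Definition has_dpath G (n : nat) : bool :=
  [exists x : V, exists s : n.-tuple V, path (marc G) x s && uniq (x :: s)].

(* Maxrank: number of arcs on a longest directed path
   (a path has at most #|V| vertices, hence fewer than #|V| arcs). *)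
Definition maxrank G : nat :=
  \max_(n < #|V|) (if has_dpath G n then (n : nat) else 0).

Definition reach G (u v : V) : bool :=
  [exists y, marc G u y && connect (marc G) y v].

Definition tclosure G : mixed_graph V :=
  MixedGraph [rel u v | medge G u v && ~~ reach G u v && ~~ reach G v u]
             [rel u v | reach G u v].

Definition Nu G (v : V) : {set V} := [set w | medge G v w].
Definition Nin G (v : V) : {set V} := [set w | marc G w v].
Definition Nout G (v : V) : {set V} := [set w | marc G v w].

Definition same_mixed_type G (u v : V) : bool :=
  [&& Nu G u :\ v == Nu G v :\ u, Nin G u == Nin G v & Nout G u == Nout G v].

Definition nd_m G : nat :=
  #|[set [set w | same_mixed_type G v w] | v : V]|.

Definition und G : rel V :=
  [rel u v | [|| medge G u v, marc G u v | marc G v u]].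

Definition vertex_cover (H : rel V) (C : {set V}) : bool :=
  [forall u, forall v, H u v ==> (u \in C) || (v \in C)].

Definition vc_num (H : rel V) : nat :=
  \big[minn/#|V|]_(C : {set V} | vertex_cover H C) #|C|.

(* A rooted forest on V given by a parent function. *)
Definition par_rel (f : {ffun V -> option V}) : rel V :=
  [rel x y | f x == Some y].

Definition ancestor (f : {ffun V -> option V}) (a v : V) : bool :=
  connect (par_rel f) v a.

Definition elim_forest (H : rel V) (f : {ffun V -> option V}) : bool :=
  [forall x, forall y, par_rel f x y ==> ~~ connect (par_rel f) y x] &&
  [forall u, forall v, H u v ==> ancestor f u v || ancestor f v u].

Definition forest_height (f : {ffun V -> option V}) : nat :=
  \max_(v : V) #|[set a | ancestor f a v]|.

Definition td_num (H : rel V) : nat :=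
  \big[minn/#|V|]_(f : {ffun V -> option V} | elim_forest H f) forest_height f.

Definition is_tree (m : nat) (T : rel 'I_m) : Prop :=
  [/\ 0 < m, symmetric T, irreflexive T,
      (forall i j, connect T i j) &
      #|[set p : 'I_m * 'I_m | T p.1 p.2]| = (m - 1).*2].

Definition tree_decomp (H : rel V) (m : nat) (T : rel 'I_m)
    (B : 'I_m -> {set V}) : Prop :=
  [/\ is_tree T,
      (forall v, exists i, v \in B i),
      (forall u v, H u v -> exists i, (u \in B i) && (v \in B i)) &
      (forall v i j, v \in B i -> v \in B j ->
         connect [rel a b | [&& T a b, v \in B a & v \in B b]] i j)].

Definition td_width (m : nat) (B : 'I_m -> {set V}) : nat :=
  (\max_(i < m) #|B i|) - 1.

Definition is_treewidth (H : rel V) (k : nat) : Prop :=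
  (exists m (T : rel 'I_m) (B : 'I_m -> {set V}),
      tree_decomp H T B /\ td_width B = k) /\
  (forall m (T : rel 'I_m) (B : 'I_m -> {set V}),
      tree_decomp H T B -> k <= td_width B).

End MixedGraphs.

From mathcomp Require Import all_boot zify.

Set Implicit Arguments.
Unset Strict Implicit.
Unset Printing Implicit Defensive.

(* Take a longest directed path P; it has maxrank + 1 vertices and any two of
   them are joined by an arc of the transitive closure. Two vertices joined by
   such an arc have different out-neighbourhoods (acyclicity), so P meets that
   many mixed types. P is a clique of the closure, and a clique lies in one
   bag of every tree decomposition by the Helly property of subtrees. In the
   underlying graph P is a path: a vertex cover contains at least every other
   vertex of it, and along a path whose edges join ancestor-descendant pairs of an
   elimination forest some vertex has more than log2 |P| ancestors on P
   (split at a common ancestor and recurse into the longer half). *)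

Lemma count_le_card (T : finType) (A : {pred T}) (s : seq T) :
  uniq s -> count (mem A) s <= #|A|.
Proof.
move=> s_uniq; rewrite -size_filter cardE.
apply: uniq_leq_size; first exact: filter_uniq.
by move=> x; rewrite mem_filter mem_enum => /andP[].
Qed.

Definition induced (T : finType) (U : {set T}) (e : rel T) : rel T :=
  [rel a b | [&& e a b, a \in U & b \in U]].

(* A shortest path cannot pass through a leaf: both its neighbours on the
   path would be the unique neighbour [u]. *)
Lemma connect_avoid_leaf (T : finType) (e : rel T) (l u i j : T) :
  symmetric e -> (forall k, e l k -> k = u) -> i != l -> j != l -> connect e i j ->
  connect [rel a b | [&& e a b, a != l & b != l]] i j.
Proof.
move=> e_sym l_leaf il jl /connectP[p e_p j_last]; subst j.
case/shortenP: e_p jl => p' e_p' p'_uniq _ jl.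
have l_notin : l \notin p'.
  apply/negP=> l_p'; move: e_p' p'_uniq jl; case/splitPr: l_p' => p1 p2.
  case: p2 => [|z p2]; first by rewrite last_cat /= eqxx.
  rewrite cat_path -cat_cons cat_uniq /= => /and3P[_ e_pl /andP[e_lz _]].
  have [zu pu] : z = u /\ last i p1 = u by split; apply: l_leaf; rewrite // e_sym.
  by case/and3P=> _ /negP[]; rewrite zu -pu mem_last orbT.
apply/connectP; exists p' => //; apply: (sub_in_path (P := predC1 l)) e_p'.
  by move=> a b; rewrite !inE => al bl eab; rewrite /= eab al bl.
by apply/andP; split=> //; apply/allP=> a a_p'; apply: contraNneq l_notin => <-.
Qed.

Lemma connect_induced_setD1 (T : finType) (e : rel T) (U : {set T}) (l u i j : T) :
  symmetric e -> {in U, forall k, e l k -> k = u} -> i != l -> j != l ->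
  connect (induced U e) i j -> connect (induced (U :\ l) e) i j.
Proof.
move=> e_sym l_leaf il jl /(connect_avoid_leaf (l := l) (u := u)) ij.
have {ij}: connect [rel a b | [&& induced U e a b, a != l & b != l]] i j.
  apply: ij => // [a b|k /and3P[elk _ kU]]; last exact: l_leaf.
  by rewrite /induced /= e_sym [(a \in U) && _]andbC.
move=> ij; apply: (connect_sub _ ij) => a b /and3P[/and3P[eab aU bU] al bl].
by apply: connect1; rewrite /induced /= !inE eab al aU bl bU.
Qed.

Section SubtreeHelly.
Variables (I V : finType) (T : rel I) (B : I -> {set V}) (K : {set V}).
Hypotheses (T_sym : symmetric T) (T_irr : irreflexive T).
Implicit Types (U : {set I}) (l u : I).

Definition arcs_in (U : {set I}) : {set I * I} := [set p | induced U T p.1 p.2].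

(* Arcs are counted in both directions, so a tree on [n.+1] nodes has [n.*2]. *)
Definition subtree_on n (U : {set I}) : Prop :=
  [/\ #|U| = n.+1, {in U &, forall i j, connect (induced U T) i j}
    & #|arcs_in U| <= n.*2].

Definition bag_edge (v : V) : rel I := [rel a b | [&& T a b, v \in B a & v \in B b]].

Definition bags_cover (U : {set I}) : Prop :=
  {in K &, forall x y, exists2 i, i \in U & (x \in B i) && (y \in B i)}.

Definition bags_connected (U : {set I}) : Prop :=
  {in K, forall v, {in U &, forall i j, v \in B i -> v \in B j ->
     connect (induced U (bag_edge v)) i j}}.

Lemma card_arcs_in U : #|arcs_in U| = \sum_(i in U) #|[set j in U | T i j]|.
Proof.
rewrite -sum1_card (eq_bigl (fun p => (p.1 \in U) && ((p.2 \in U) && T p.1 p.2))).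
  rewrite -(pair_big_dep _ (fun i j => (j \in U) && T i j) (fun _ _ => 1)) /=.
  by apply: eq_bigr => i _; rewrite sum1_card; apply: eq_card => j; rewrite inE.
by move=> [a b]; rewrite inE /induced /= andbC andbA.
Qed.

Lemma exists_leaf n U : #|U| = n.+1 -> #|arcs_in U| <= n.*2 ->
  exists2 l, l \in U & #|[set j in U | T l j]| <= 1.
Proof.
move=> cardU arcsU; apply/exists_inP; apply: contraTT arcsU => /exists_inPn deg2.
have: \sum_(i in U) 2 <= \sum_(i in U) #|[set j in U | T i j]|.
  by apply: leq_sum => i iU; rewrite ltnNge deg2.
rewrite sum_nat_const cardU -card_arcs_in -ltnNge; lia.
Qed.

Lemma card_arcs_in_setD1 U l u :
  induced U T l u -> (#|arcs_in (U :\ l)|).+2 <= #|arcs_in U|.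
Proof.
move=> /and3P[Tlu lU uU].
have ul : u != l by apply: contraTneq Tlu => ->; rewrite T_irr.
have lu_arc : (l, u) \in arcs_in U by rewrite inE /induced /= Tlu lU uU.
have ul_arc : (u, l) \in arcs_in U :\ (l, u).
  by rewrite !inE /induced /= T_sym Tlu lU uU xpair_eqE negb_and ul.
have sub : arcs_in (U :\ l) \subset arcs_in U :\ (l, u) :\ (u, l).
  apply/subsetP=> -[a b]; rewrite !inE /induced /= !inE !xpair_eqE.
  case/and3P=> Tab /andP[al aU] /andP[bl bU].
  by rewrite Tab aU bU (negbTE al) (negbTE bl) !andbF.
rewrite (cardsD1 (l, u) (arcs_in U)) lu_arc (cardsD1 (u, l) (_ :\ _)) ul_arc.
by rewrite add1n add1n !ltnS (subset_leq_card sub).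
Qed.

Lemma subtree_on_leaf n U : subtree_on n.+1 U ->
  exists l u, [/\ l \in U, u \in U :\ l, {in U, forall k, T l k -> k = u}
    & subtree_on n (U :\ l)].
Proof.
case=> cardU U_conn U_arcs; have [l lU l_deg] := exists_leaf cardU U_arcs.
have cardUl : #|U :\ l| = n.+1 by move: cardU; rewrite (cardsD1 l) lU => -[].
have [j] : exists j, j \in U :\ l by apply/card_gt0P; rewrite cardUl.
rewrite !inE => /andP[jl jU].
have [u lu u_uniq] : exists2 u, induced U T l u & {in U, forall k, T l k -> k = u}.
  have /connectP[[|u p] /=] := U_conn l j lU jU.
    by move=> _ jE; rewrite jE eqxx in jl.
  case/andP=> lu _ _; exists u => // k kU Tlk; apply: (card_le1_eqP l_deg).
    by case/and3P: lu => Tlu _ uU; rewrite inE uU Tlu.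
  by rewrite inE kU Tlk.
have /and3P[Tlu _ uU] := lu.
exists l, u; split=> //.
  by rewrite !inE uU andbT; apply: contraTneq Tlu => ->; rewrite T_irr.
split=> // [a b|]; rewrite ?inE.
  move=> /andP[al aU] /andP[bl bU].
  exact: connect_induced_setD1 T_sym u_uniq al bl (U_conn a b aU bU).
have := card_arcs_in_setD1 lu; lia.
Qed.

Lemma private_vertex_bag U l u v :
  l \in U -> {in U, forall k, T l k -> k = u} -> bags_cover U -> bags_connected U ->
  v \in K -> v \in B l -> v \notin B u -> K \subset B l.
Proof.
move=> lU l_leaf coverU connU vK vl vu; apply/subsetP=> y yK.
have [i iU /andP[vi yi]] := coverU v y vK yK.
case: (eqVneq i l) => [<- // | il].
have /connectP[[|k p] /=] := connU v vK l i lU iU vl vi.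
  by move=> _ iE; rewrite iE eqxx in il.
case/andP=> /and3P[/and3P[Tlk _ vk] _ kU] _ _.
by rewrite (l_leaf k kU Tlk) (negbTE vu) in vk.
Qed.

Lemma bags_cover_setD1 U l u :
  u \in U :\ l -> {in K, forall v, v \in B l -> v \in B u} ->
  bags_cover U -> bags_cover (U :\ l).
Proof.
move=> uUl lu coverU x y xK yK; have [i iU /andP[xi yi]] := coverU x y xK yK.
case: (eqVneq i l) => [il | il].
  by exists u => //; apply/andP; split; apply: lu; rewrite // -il.
by exists i; rewrite ?inE ?il ?iU ?xi ?yi.
Qed.

Lemma bags_connected_setD1 U l u :
  {in U, forall k, T l k -> k = u} -> bags_connected U -> bags_connected (U :\ l).
Proof.
move=> l_leaf connU v vK i j; rewrite !inE => /andP[il iU] /andP[jl jU] vi vj.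
apply: (connect_induced_setD1 (u := u)) il jl (connU v vK i j iU jU vi vj).
  by move=> a b; rewrite /bag_edge /= T_sym [(v \in B a) && _]andbC.
by move=> k kU /and3P[Tlk _ _]; apply: l_leaf.
Qed.

Lemma subtree_bags_helly n U :
  subtree_on n U -> bags_cover U -> bags_connected U ->
  exists2 i, i \in U & K \subset B i.
Proof.
elim: n U => [|n IHn] U treeU coverU connU.
  have [/eqP/cards1P[i Ui] _ _] := treeU.
  exists i; first by rewrite Ui set11.
  apply/subsetP=> v vK; have [j] := coverU v v vK vK.
  by rewrite Ui inE => /eqP-> /andP[].
have [l [u [lU uUl l_leaf treeUl]]] := subtree_on_leaf treeU.
case: (boolP [exists v in K, (v \in B l) && (v \notin B u)]).
  case/exists_inP=> v vK /andP[vl vu]; exists l => //.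
  exact: (private_vertex_bag lU l_leaf coverU connU vK vl vu).
move/exists_inPn=> no_private.
have lu : {in K, forall v, v \in B l -> v \in B u}.
  by move=> v vK vl; move: (no_private v vK); rewrite vl negbK.
have [i] := IHn _ treeUl (bags_cover_setD1 uUl lu coverU)
  (bags_connected_setD1 l_leaf connU).
by rewrite inE => /andP[_ iU]; exists i.
Qed.

End SubtreeHelly.

Lemma tree_decomp_clique_in_bag (V : finType) (H : rel V) m (T : rel 'I_m)
    (B : 'I_m -> {set V}) (K : {set V}) :
  tree_decomp H T B -> {in K &, forall x y, x != y -> H x y} ->
  exists i, K \subset B i.
Proof.
case=> [[m_gt0 T_sym T_irr T_conn T_arcs] B_cover B_edge B_conn] K_clique.
have induced_setT (e : rel 'I_m) : induced setT e =2 e.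
  by move=> a b; rewrite /induced /= !in_setT !andbT.
have treeT : subtree_on T m.-1 setT.
  split; first by rewrite cardsT card_ord prednK.
    by move=> i j _ _; rewrite (eq_connect (induced_setT T)); apply: T_conn.
  have -> : arcs_in T setT = [set p | T p.1 p.2].
    by apply/setP=> p; rewrite !inE induced_setT.
  by rewrite T_arcs subn1.
have [i _ KBi] : exists2 i, i \in setT & K \subset B i.
  apply: (subtree_bags_helly T_sym T_irr treeT).
    move=> x y xK yK; case: (eqVneq x y) => [<- | xy].
      by have [i xi] := B_cover x; exists i; rewrite ?in_setT ?xi.
    by have [i xyi] := B_edge x y (K_clique x y xK yK xy); exists i.
  by move=> v _ i j _ _ vi vj; rewrite (eq_connect (induced_setT _)); apply: B_conn.
by exists i.
Qed.

Lemma treewidth_ge_clique (V : finType) (H : rel V) (K : {set V}) k :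
  is_treewidth H k -> {in K &, forall x y, x != y -> H x y} -> #|K| <= k.+1.
Proof.
case=> -[m [T [B [decomp <-]]]] _ K_clique.
have [i KBi] := tree_decomp_clique_in_bag decomp K_clique.
have := subset_leq_card KBi; have := leq_bigmax (F := fun j => #|B j|) i.
rewrite /td_width /=; lia.
Qed.

Section EliminationForest.
Variables (V : finType) (f : {ffun V -> option V}).

Definition anc_comparable : rel V := [rel a b | ancestor f a b || ancestor f b a].

(* Each vertex has at most one parent, so the ancestors of a vertex form a chain. *)
Lemma ancestor_comparable a b v :
  ancestor f a v -> ancestor f b v -> anc_comparable a b.
Proof.
rewrite /anc_comparable /ancestor /= => /connectP[p v_p ->] {a}.
elim: p v v_p => [|y p IHp] v /=; first by move=> _ ->; rewrite orbT.
case/andP=> vy y_p /connectP[[|z q] /=].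
  by move=> _ ->; apply/orP; left; apply/connectP; exists (y :: p) => //=; rewrite vy.
case/andP=> vz z_q b_last; have zy : z = y.
  by move: vy vz; rewrite /par_rel /= => /eqP-> /eqP[].
by subst z; apply: IHp => //; apply/connectP; exists q.
Qed.

Lemma path_comparable_top x s : path anc_comparable x s ->
  exists2 r, r \in x :: s & {in x :: s, forall y, ancestor f r y}.
Proof.
elim: s x => [|y s IHs] x /=.
  by move=> _; exists x => [|z]; rewrite ?mem_head // inE => /eqP->; apply: connect0.
case/andP=> xy /IHs[r r_in r_top]; have ry := r_top y (mem_head _ _).
have [rx | xr] : ancestor f r x \/ ancestor f x r.
- case/orP: xy => [xy | yx]; last by left; apply: connect_trans yx ry.
  by case/orP: (ancestor_comparable xy ry); [right | left].
- exists r; first by rewrite in_cons r_in orbT.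
  by move=> z; rewrite in_cons => /predU1P[-> | /r_top].
- exists x; first exact: mem_head.
  move=> z; rewrite in_cons => /predU1P[-> | /r_top rz]; first exact: connect0.
  exact: connect_trans rz xr.
Qed.

(* Split at a common ancestor [r]: the longer side has at least half of the
   remaining vertices, and [r] adds one to every ancestor count. *)
Lemma sorted_comparable_deep q : sorted anc_comparable q -> q != [::] ->
  exists2 w, w \in q & size q < 2 ^ count (ancestor f ^~ w) q.
Proof.
have [n] := ubnP (size q); elim: n q => // n IHn q size_q q_sorted q_nil.
have [r r_in r_top] : exists2 r, r \in q & {in q, forall y, ancestor f r y}.
  by case: q q_sorted q_nil {size_q} => // x s /path_comparable_top.
move: r_top size_q q_sorted; case/splitPr: r_in => q1 q2 r_top size_q q_sorted.
set qi := if size q1 <= size q2 then q2 else q1.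
have qi_sorted : sorted anc_comparable qi.
  by case: (cat_sorted2 q_sorted) => s1 /path_sorted s2; rewrite /qi; case: ifP.
have qi_size : size q1 + size q2 <= (size qi).*2 by rewrite /qi; case: ifP; lia.
have qi_sub : {subset qi <= q1 ++ r :: q2}.
  by move=> a; rewrite /qi mem_cat in_cons; case: ifP => _ ->; rewrite ?orbT.
have qi_count w : w \in q1 ++ r :: q2 ->
    (count (ancestor f ^~ w) qi).+1 <= count (ancestor f ^~ w) (q1 ++ r :: q2).
  by move=> /r_top rw; rewrite count_cat /= rw /qi; case: ifP; lia.
have r_q : r \in q1 ++ r :: q2 by rewrite mem_cat mem_head orbT.
have [qi_nil | qi_nonnil] := eqVneq qi [::].
  exists r => //; have := qi_count r r_q.
  have := ltn_expl (count (ancestor f ^~ r) (q1 ++ r :: q2)) (isT : 1 < 2).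
  by move: qi_size; rewrite qi_nil size_cat /=; lia.
have [|w w_qi w_deep] := IHn qi _ qi_sorted qi_nonnil.
  by move: size_q; rewrite size_cat /qi /=; case: ifP; lia.
exists w; first exact: qi_sub.
have := leq_pexp2l (isT : 0 < 2) (qi_count w (qi_sub w w_qi)).
by move: qi_size w_deep; rewrite expnS size_cat /=; lia.
Qed.

End EliminationForest.

Lemma path_size_lt_exp_td_num (V : finType) (H : rel V) x s :
  path H x s -> uniq (x :: s) -> size (x :: s) < 2 ^ td_num H.
Proof.
move=> H_path s_uniq; apply: (big_ind (fun h => size (x :: s) < 2 ^ h)).
- apply: leq_ltn_trans (ltn_expl _ (isT : 1 < 2)).
  by rewrite -(card_uniqP s_uniq); apply: max_card.
- by move=> a b; rewrite /minn; case: ifP.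
- move=> f /andP[_ /forallP H_comp].
  have: sorted (anc_comparable f) (x :: s).
    by apply: sub_path H_path => a b; apply/implyP/(forallP (H_comp a)).
  case/sorted_comparable_deep=> // w _ w_deep.
  apply: leq_trans w_deep _; rewrite leq_pexp2l //.
  apply: leq_trans (leq_bigmax (F := fun v => #|[set a | ancestor f a v]|) w).
  rewrite -(eq_count (a1 := mem [set a | ancestor f a w])) ?count_le_card //.
  by move=> a; rewrite /= inE.
Qed.

Lemma vertex_cover_path (V : finType) (H : rel V) (C : {set V}) x s :
  vertex_cover H C -> path H x s -> size s + (x \in C) <= (count (mem C) (x :: s)).*2.
Proof.
move/forallP=> C_cover; elim: s x => [|y s IHs] x /=; first by case: (x \in C).
case/andP=> xy /IHs /=; have := implyP (forallP (C_cover x) y) xy.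
by case: (x \in C); case: (y \in C) => /=; lia.
Qed.

Lemma path_size_le_vc_num (V : finType) (H : rel V) x s :
  path H x s -> uniq (x :: s) -> size s <= 2 * vc_num H.
Proof.
move=> H_path s_uniq; apply: (big_ind (fun c => size s <= 2 * c)).
- have := max_card (mem (x :: s)); rewrite (card_uniqP s_uniq) /=; lia.
- by move=> a b; rewrite /minn; case: ifP.
- move=> C C_cover; have := vertex_cover_path C_cover H_path.
  have := count_le_card C s_uniq; lia.
Qed.

Lemma same_mixed_type_refl (V : finType) (G : mixed_graph V) v :
  same_mixed_type G v v.
Proof. by rewrite /same_mixed_type !eqxx. Qed.

Section MixedGraph.
Variables (V : finType) (G : mixed_graph V).

Lemma path_reach x s : path (marc G) x s ->
  {in x :: s &, forall u w, [|| u == w, reach G u w | reach G w u]}.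
Proof.
elim: s x => [|y s IHs] x /=.
  by move=> _ u w; rewrite !inE => /eqP-> /eqP->; rewrite eqxx.
case/andP=> xy y_path.
have reach_x z : z \in y :: s -> reach G x z.
  by move=> z_in; apply/existsP; exists y; rewrite xy (path_connect y_path).
move=> u w; rewrite !(in_cons x) => /predU1P[-> | u_in] /predU1P[-> | w_in].
- by rewrite eqxx.
- by rewrite reach_x ?orbT.
- by rewrite reach_x ?orbT.
- exact: IHs y_path u w u_in w_in.
Qed.

Lemma dpath_clique_tclosure x s : path (marc G) x s ->
  {in [set v in x :: s] &, forall u w, u != w -> und (tclosure G) u w}.
Proof.
move=> G_path u w; rewrite !inE => u_in w_in uw; rewrite /und /=.
case/or3P: (path_reach G_path u_in w_in) => [/eqP uw' | -> | ->]; rewrite ?orbT //.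
by rewrite uw' eqxx in uw.
Qed.

Lemma longest_dpath : 0 < #|V| ->
  exists x s, [/\ size s = maxrank G, path (marc G) x s & uniq (x :: s)].
Proof.
move=> V_gt0; have [x0 _] := card_gt0P V_gt0.
have ord_gt0 : 0 < #|'I_#|V| | by rewrite card_ord.
have [n] := eq_bigmax (fun n : 'I_#|V| => if has_dpath G n then val n else 0) ord_gt0.
rewrite /maxrank => ->; case: ifP => [/existsP[x /existsP[s /andP[]]] | _].
  by exists x, s; rewrite size_tuple.
by exists x0, [::].
Qed.

Hypothesis G_acyclic : no_directed_cycle G.

Lemma reach_irrefl v : ~~ reach G v v.
Proof. by apply/existsP=> -[y /andP[vy yv]]; have := G_acyclic vy; rewrite yv. Qed.

Lemma reach_mixed_type_neq a b : reach G a b ->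
  [set w | same_mixed_type (tclosure G) a w] !=
  [set w | same_mixed_type (tclosure G) b w].
Proof.
move=> ab; apply/eqP=> eq_class.
have: a \in [set w | same_mixed_type (tclosure G) b w].
  by rewrite -eq_class inE same_mixed_type_refl.
rewrite inE => /and3P[_ _ /eqP out_ba].
have: b \in Nout (tclosure G) a by rewrite inE.
by rewrite -out_ba inE /= (negbTE (reach_irrefl b)).
Qed.

Lemma dpath_size_le_nd_m x s : path (marc G) x s -> uniq (x :: s) ->
  size (x :: s) <= nd_m (tclosure G).
Proof.
move=> G_path s_uniq.
have class_inj : {in x :: s &, injective
    (fun v => [set w | same_mixed_type (tclosure G) v w])}.
  move=> u w u_in w_in eq_class.
  case/or3P: (path_reach G_path u_in w_in) => [/eqP // | uw | wu].
    by have := reach_mixed_type_neq uw; rewrite eq_class eqxx.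
  by have := reach_mixed_type_neq wu; rewrite eq_class eqxx.
rewrite -(card_uniqP s_uniq) -(card_in_imset class_inj); apply: subset_leq_card.
by apply/subsetP=> _ /imsetP[v _ ->]; apply/imsetP; exists v.
Qed.

End MixedGraph.

Theorem mainTheorem11 (V : finType) (G : mixed_graph V) :
  0 < #|V| -> simple_mixed G -> no_directed_cycle G ->
  [/\ maxrank G + 1 <= nd_m (tclosure G),
      (forall k, is_treewidth (und (tclosure G)) k -> maxrank G <= k),
      maxrank G <= 2 ^ td_num (und G) - 2 &
      maxrank G <= 2 * vc_num (und G)].
Proof.
move=> V_gt0 _ G_acyclic.
have [x [s [<- G_path s_uniq]]] := longest_dpath G V_gt0.
have und_path : path (und G) x s.
  by apply: sub_path G_path => a b ab; rewrite /und /= ab orbT.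
split.
- by have := dpath_size_le_nd_m G_acyclic G_path s_uniq; rewrite addn1.
- move=> k /treewidth_ge_clique/(_ (dpath_clique_tclosure G_path)).
  by rewrite cardsE (card_uniqP s_uniq).
- by have := path_size_lt_exp_td_num und_path s_uniq; rewrite /=; lia.
- exact: path_size_le_vc_num und_path s_uniq.
Qed.
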